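(* Let $\nu:\mathcal{P}(\mathbf{N})\to\mathbf{R}$ be a normalized capacity and let $\mathcal{I}$ be an ideal on $\mathbf{N}$. The following are equivalent: (i) $\nu$ is $\mathcal{I}$-invariant; (ii) there exists a normalized capacity $\rho:\mathscr{B}(\mathrm{Ult}(\mathcal{I}))\to\mathbf{R}$ such that for every $x\in\ell_\infty$, $$\int_{\mathbf{N}} x\,\mathrm{d}\nu=\int_{\mathrm{Ult}(\mathcal{I})}\Big(\int_{\mathbf{N}} x\,\mathrm{d}\mu_{\mathcal{F}}\Big)\,\mathrm{d}\rho(\mathcal{F});$$ (iii) there exists a normalized capacity $\rho:\mathscr{B}(\mathrm{Ult}(\mathcal{I}))\to\mathbf{R}$ such that for every $A\subseteq\mathbf{N}$, $$\nu(A)=\int_{\mathrm{Ult}(\mathcal{I})}\mu_{\mathcal{F}}(A)\,\mathrm{d}\rho(\mathcal{F}).$$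
   Context: $\mathbf{N}$ is the set of positive integers. Given a measurable space $(S,\Sigma)$, a normalized capacity $\nu:\Sigma\to\mathbf{R}$ is a set function with $\nu(A)\le\nu(B)$ whenever $A\subseteq B$, $\nu(\emptyset)=0$, $\nu(S)=1$. An ideal on $\mathbf{N}$ is a family $\mathcal{I}\subseteq\mathcal{P}(\mathbf{N})$ closed under subsets and finite unions, with $\mathbf{N}\notin\mathcal{I}$, and (standing assumption) containing all finite subsets of $\mathbf{N}$. Its dual filter is $\mathcal{I}^\star=\{A\subseteq\mathbf{N}:\mathbf{N}\setminus A\in\mathcal{I}\}$. A normalized capacity $\nu$ on $\mathcal{P}(\mathbf{N})$ is $\mathcal{I}$-invariant if $\nu(A)=\nu(B)$ whenever the symmetric difference $A\triangle B\in\mathcal{I}$. $\beta\mathbf{N}$ denotes the space of ultrafilters on $\mathbf{N}$ with the topology generated by the clopen basis $\{\{\mathcal{F}\in\beta\mathbf{N}:A\in\mathcal{F}\}:A\subseteq\mathbf{N}\}$; $\mathrm{Ult}(\mathcal{I})=\{\mathcal{F}\in\beta\mathbf{N}:\mathcal{I}^\star\subseteq\mathcal{F}\}$ with the relative topology, and $\mathscr{B}(\cdot)$ denotes the Borel $\sigma$-algebra. For $\mathcal{F}\in\mathrm{Ult}(\mathcal{I})$, $\mu_{\mathcal{F}}:\mathcal{P}(\mathbf{N})\to\{0,1\}$ is given by $\mu_{\mathcal{F}}(A)=1$ iff $A\in\mathcal{F}$. $\ell_\infty$ is the space of bounded real sequences. For a bounded function $x$ on $S$ and a normalized capacity $\nu$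 (defined at least on the upper level sets of $x$), the Choquet integral is $\int_S x\,\mathrm{d}\nu=\int_0^\infty\nu(x\ge t)\,\mathrm{d}t+\int_{-\infty}^0[\nu(x\ge t)-\nu(S)]\,\mathrm{d}t$ (improper Riemann integrals). *)

From Stdlib Require Import Reals Lra ClassicalDescription.
From Coquelicot Require Import Coquelicot.
Open Scope R_scope.

Definition PosNat : Type := {n : nat | (0 < n)%nat}.

Definition compl (A : PosNat -> Prop) : PosNat -> Prop := fun n => ~ A n.
Definition symdiff (A B : PosNat -> Prop) : PosNat -> Prop :=
  fun n => (A n /\ ~ B n) \/ (B n /\ ~ A n).
Definition finite_set (A : PosNat -> Prop) : Prop :=
  exists m : nat, forall n : PosNat, A n -> (proj1_sig n < m)%nat.

(* Ideal on N (with the standing assumption: contains all finite sets). *)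
Definition is_ideal (I : (PosNat -> Prop) -> Prop) : Prop :=
  (forall A B : PosNat -> Prop, I B -> (forall n, A n -> B n) -> I A) /\
  (forall A B : PosNat -> Prop, I A -> I B -> I (fun n => A n \/ B n)) /\
  ~ I (fun _ => True) /\
  (forall A : PosNat -> Prop, finite_set A -> I A).

Definition dual_filter (I : (PosNat -> Prop) -> Prop) (A : PosNat -> Prop) : Prop :=
  I (compl A).

Definition normalized_capacity (nu : (PosNat -> Prop) -> R) : Prop :=
  (forall A B : PosNat -> Prop, (forall n, A n -> B n) -> nu A <= nu B) /\
  nu (fun _ => False) = 0 /\ nu (fun _ => True) = 1.

Definition I_invariant (I : (PosNat -> Prop) -> Prop) (nu : (PosNat -> Prop) -> R) : Prop :=
  forall A B : PosNat -> Prop, I (symdiff A B) -> nu A = nu B.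

Definition is_ultrafilter (F : (PosNat -> Prop) -> Prop) : Prop :=
  ~ F (fun _ => False) /\
  (forall A B : PosNat -> Prop, F A -> (forall n, A n -> B n) -> F B) /\
  (forall A B : PosNat -> Prop, F A -> F B -> F (fun n => A n /\ B n)) /\
  (forall A : PosNat -> Prop, F A \/ F (compl A)).

Definition in_Ult (I : (PosNat -> Prop) -> Prop) (F : (PosNat -> Prop) -> Prop) : Prop :=
  is_ultrafilter F /\ (forall A, dual_filter I A -> F A).

Definition Ult (I : (PosNat -> Prop) -> Prop) : Type :=
  {F : (PosNat -> Prop) -> Prop | in_Ult I F}.

(* Open sets of Ult(I) for the relative topology of beta N, whose topology
   is generated by the clopen basis {F | A \in F}. *)
Definition ult_open (I : (PosNat -> Prop) -> Prop) (O : Ult I -> Prop) : Prop :=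
  forall F : Ult I, O F ->
    exists A : PosNat -> Prop, proj1_sig F A /\
      (forall G : Ult I, proj1_sig G A -> O G).

Inductive ult_borel (I : (PosNat -> Prop) -> Prop) : (Ult I -> Prop) -> Prop :=
| ub_open (O : Ult I -> Prop) : ult_open I O -> ult_borel I O
| ub_compl (B : Ult I -> Prop) : ult_borel I B -> ult_borel I (fun F => ~ B F)
| ub_union (B : nat -> Ult I -> Prop) :
    (forall k, ult_borel I (B k)) -> ult_borel I (fun F => exists k, B k F)
| ub_ext (B C : Ult I -> Prop) :
    ult_borel I B -> (forall F, B F <-> C F) -> ult_borel I C.

Definition borel_normalized_capacity (I : (PosNat -> Prop) -> Prop)
    (rho : (Ult I -> Prop) -> R) : Prop :=
  (forall A B : Ult I -> Prop, ult_borel I A -> ult_borel I B ->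
     (forall F, A F -> B F) -> rho A <= rho B) /\
  rho (fun _ => False) = 0 /\ rho (fun _ => True) = 1.

Definition mu (F : (PosNat -> Prop) -> Prop) (A : PosNat -> Prop) : R :=
  if excluded_middle_informative (F A) then 1 else 0.

Definition ell_inf (x : PosNat -> R) : Prop :=
  exists M : R, forall n, Rabs (x n) <= M.

Definition choquet {T : Type} (nu : (T -> Prop) -> R) (x : T -> R) : R :=
  RInt_gen (fun t => nu (fun s => t <= x s)) (at_point 0) (Rbar_locally p_infty)
  + RInt_gen (fun t => nu (fun s => t <= x s) - nu (fun _ => True))
      (Rbar_locally m_infty) (at_point 0).

(* An I-invariant capacity only sees, of a set A, the clopen set
   Â = {F in Ult(I) | A in F}: by the ultrafilter lemma, Â ⊆ B̂ forces A \ B in I,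
   hence nu A <= nu B.  So rho(B) := sup {nu A | Â ⊆ B} is a normalized capacity
   with rho(Â) = nu A.  For bounded x, the Choquet integral of x against mu_F is
   the F-limit of x, and the upper level sets of F |-> F-lim x lie between the
   clopen sets of {x >= t} and {x >= t'} for every t' < t; two nonincreasing
   level functions squeezed like this have the same integral, which gives (ii).
   On indicators (ii) yields (iii), and under (iii) nu A depends only on Â, which
   does not change when A is modified by a set of I. *)

From Stdlib Require Import Reals Lra Classical ClassicalDescription.
From Coquelicot Require Import Coquelicot.
From mathcomp Require boolp filter.
Open Scope R_scope.

Lemma is_RInt_const_on (h : R -> R) (a b v : R) :
  (forall t, Rmin a b < t < Rmax a b -> h t = v) -> is_RInt h a b ((b - a) * v).
Proof.
  intros Hh. apply (is_RInt_ext (fun _ => v)); [|exact (is_RInt_const a b v)].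
  intros t Ht. symmetry. exact (Hh t Ht).
Qed.

Lemma is_RInt_two_valued (h : R -> R) (a m b v1 v2 : R) : a <= m <= b ->
  (forall t, a < t < m -> h t = v1) -> (forall t, m < t < b -> h t = v2) ->
  is_RInt h a b ((m - a) * v1 + (b - m) * v2).
Proof.
  intros Hm H1 H2. apply (is_RInt_Chasles h a m b); apply is_RInt_const_on;
    intros t Ht; rewrite Rmin_left, Rmax_right in Ht by lra; auto.
Qed.

Lemma is_RInt_glue (g1 g2 : R -> R) (a m b l1 l2 : R) : a <= m <= b ->
  is_RInt g1 a m l1 -> is_RInt g2 m b l2 ->
  is_RInt (fun t => if Rle_dec t m then g1 t else g2 t) a b (l1 + l2).
Proof.
  intros Hm H1 H2. refine (is_RInt_Chasles _ a m b l1 l2 _ _).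
  - apply (is_RInt_ext g1); [|exact H1]. intros t Ht.
    rewrite Rmin_left, Rmax_right in Ht by lra. destruct Rle_dec; [reflexivity|lra].
  - apply (is_RInt_ext g2); [|exact H2]. intros t Ht.
    rewrite Rmin_left, Rmax_right in Ht by lra. destruct Rle_dec; [lra|reflexivity].
Qed.

Lemma ex_RInt_squeeze (f : R -> R) (a b : R) : a < b ->
  (forall eps, 0 < eps -> exists g1 g2 l1 l2, is_RInt g1 a b l1 /\ is_RInt g2 a b l2 /\
     (forall t, a <= t <= b -> g1 t <= f t <= g2 t) /\ l2 - l1 < eps) ->
  ex_RInt f a b.
Proof.
  intros Hab Hsq.
  set (Ff := filtermap (fun ptd => scal (sign (b - a)) (Riemann_sum f ptd)) (Riemann_fine a b)).
  assert (Hsign : sign (b - a) = 1) by (apply sign_eq_1; lra).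
  assert (Hfine : Riemann_fine a b (fun ptd => pointed_subdiv ptd /\ SF_h ptd = a /\
            seq.last (SF_h ptd) (SF_lx ptd) = b)).
  { unfold Riemann_fine, within. apply filter_forall. intros ptd Hptd.
    rewrite Rmin_left, Rmax_right in Hptd by lra. exact Hptd. }
  assert (Hcauchy : cauchy Ff).
  { intros [eps Heps].
    destruct (Hsq (eps / 3)) as (g1 & g2 & l1 & l2 & H1 & H2 & Hg & Hgap); [lra|].
    assert (Hd : 0 < eps / 3) by lra.
    pose proof (proj1 (filterlim_locally _ _) H1 (mkposreal _ Hd)) as C1.
    pose proof (proj1 (filterlim_locally _ _) H2 (mkposreal _ Hd)) as C2.
    exists ((l1 + l2) / 2). unfold Ff, filtermap.
    generalize (filter_and _ _ Hfine (filter_and _ _ C1 C2)).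
    apply filter_imp. intros ptd [[Hptd [Ha Hb]] [K1 K2]].
    rewrite Hsign in K1, K2 |- *.
    assert (S1 : Riemann_sum g1 ptd <= Riemann_sum f ptd).
    { apply Riemann_sum_le; [exact Hptd|]. intros t. rewrite Hb, Ha. apply Hg. }
    assert (S2 : Riemann_sum f ptd <= Riemann_sum g2 ptd).
    { apply Riemann_sum_le; [exact Hptd|]. intros t. rewrite Hb, Ha. apply Hg. }
    change (Rabs (1 * Riemann_sum g1 ptd - l1) < eps / 3) in K1.
    change (Rabs (1 * Riemann_sum g2 ptd - l2) < eps / 3) in K2.
    change (Rabs (1 * Riemann_sum f ptd - (l1 + l2) / 2) < eps).
    apply Rabs_def2 in K1, K2. apply Rabs_def1; lra. }
  exists (lim Ff). apply filterlim_locally. intros eps.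
  apply (complete_cauchy Ff); [|exact Hcauchy].
  apply filtermap_proper_filter, Riemann_fine_filter.
Qed.

Lemma decreasing_step_bounds (f : R -> R) (h : R) : decreasing f -> 0 < h ->
  forall (k : nat) (c d : R), c <= d <= c + INR k * h ->
  exists g1 g2 l1 l2, is_RInt g1 c d l1 /\ is_RInt g2 c d l2 /\
    (forall t, c <= t <= d -> g1 t <= f t <= g2 t) /\ l2 - l1 <= h * (f c - f d).
Proof.
  intros Hf Hh.
  assert (Hshort : forall c d, c <= d <= c + h ->
    exists g1 g2 l1 l2, is_RInt g1 c d l1 /\ is_RInt g2 c d l2 /\
      (forall t, c <= t <= d -> g1 t <= f t <= g2 t) /\ l2 - l1 <= h * (f c - f d)).
  { intros c d Hcd. assert (f d <= f c) by (apply Hf; lra).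
    exists (fun _ => f d), (fun _ => f c), ((d - c) * f d), ((d - c) * f c).
    split; [exact (is_RInt_const c d (f d))|].
    split; [exact (is_RInt_const c d (f c))|].
    split; [intros t Ht; split; apply Hf; lra|nra]. }
  induction k as [|k IH]; intros c d Hcd.
  - apply Hshort. simpl in Hcd. lra.
  - destruct (Rle_dec d (c + h)) as [Hd|Hd]; [apply Hshort; lra|].
    rewrite S_INR in Hcd.
    destruct (IH (c + h) d) as (g1 & g2 & l1 & l2 & H1 & H2 & Hg & Hgap); [lra|].
    exists (fun t => if Rle_dec t (c + h) then f (c + h) else g1 t),
      (fun t => if Rle_dec t (c + h) then f c else g2 t),
      ((c + h - c) * f (c + h) + l1), ((c + h - c) * f c + l2).
    split; [apply is_RInt_glue; [lra|exact (is_RInt_const _ _ _)|exact H1]|].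
    split; [apply is_RInt_glue; [lra|exact (is_RInt_const _ _ _)|exact H2]|].
    split.
    + intros t Ht. destruct Rle_dec; [split; apply Hf; lra|apply Hg; lra].
    + lra.
Qed.

Lemma ex_RInt_decreasing (f : R -> R) (a b : R) : decreasing f -> ex_RInt f a b.
Proof.
  intros Hf.
  assert (Hlt : forall a b, a < b -> ex_RInt f a b).
  { clear a b. intros a b Hab. apply ex_RInt_squeeze; [exact Hab|]. intros eps Heps.
    assert (Hfab : f b <= f a) by (apply Hf; lra).
    set (h := eps / (f a - f b + 1)).
    assert (Hh : 0 < h) by (apply Rdiv_lt_0_compat; lra).
    assert (Hgap : h * (f a - f b) < eps).
    { unfold h. apply (Rmult_lt_reg_r (f a - f b + 1)); [lra|].
      field_simplify; [nra|lra]. }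
    destruct (nfloor_ex ((b - a) / h)) as [n Hn]; [apply Rdiv_le_0_compat; lra|].
    assert (Hb : b <= a + INR (S n) * h).
    { rewrite S_INR. assert ((b - a) / h * h = b - a) by (field; lra). nra. }
    destruct (decreasing_step_bounds f h Hf Hh (S n) a b) as (g1 & g2 & l1 & l2 & H1 & H2 & Hg & Hstep);
      [lra|].
    exists g1, g2, l1, l2. split; [exact H1|split; [exact H2|split; [exact Hg|lra]]]. }
  destruct (Rtotal_order a b) as [Hab|[<-|Hab]].
  - exact (Hlt a b Hab).
  - apply ex_RInt_point.
  - apply ex_RInt_swap, Hlt, Hab.
Qed.

Lemma is_RInt_zero (a b : R) : is_RInt (fun _ => 0) a b 0.
Proof.
  pose proof (is_RInt_const_on (fun _ => 0) a b 0 (fun _ _ => eq_refl)) as H.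
  rewrite Rmult_0_r in H. exact H.
Qed.

Lemma is_RInt_gen_pinfty_of_support (g : R -> R) (M l : R) :
  is_RInt g 0 M l -> (forall t, M < t -> g t = 0) ->
  is_RInt_gen g (at_point 0) (Rbar_locally p_infty) l.
Proof.
  intros Hg Hzero P HP.
  apply (Filter_prod _ _ _ (fun a => a = 0) (fun b => M < b)); [reflexivity|exists M; auto|].
  intros a b -> Hb. exists l. split; [|exact (locally_singleton _ _ HP)].
  rewrite <- (Rplus_0_r l). refine (is_RInt_Chasles g 0 M b l 0 Hg _).
  apply (is_RInt_ext (fun _ => 0)); [|apply is_RInt_zero].
  intros t Ht. rewrite Rmin_left, Rmax_right in Ht by lra. rewrite Hzero by lra. reflexivity.
Qed.

Lemma is_RInt_gen_minfty_of_support (g : R -> R) (M l : R) :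
  is_RInt g (- M) 0 l -> (forall t, t < - M -> g t = 0) ->
  is_RInt_gen g (Rbar_locally m_infty) (at_point 0) l.
Proof.
  intros Hg Hzero P HP.
  apply (Filter_prod _ _ _ (fun a => a < - M) (fun b => b = 0)); [exists (- M); auto|reflexivity|].
  intros a b Ha ->. exists l. split; [|exact (locally_singleton _ _ HP)].
  rewrite <- (Rplus_0_l l). refine (is_RInt_Chasles g a (- M) 0 0 l _ Hg).
  apply (is_RInt_ext (fun _ => 0)); [|apply is_RInt_zero].
  intros t Ht. rewrite Rmin_left, Rmax_right in Ht by lra. rewrite Hzero by lra. reflexivity.
Qed.

Lemma RInt_shift (f : R -> R) (a b d : R) : ex_RInt f (a - d) (b - d) ->
  RInt (fun t => f (t - d)) a b = RInt f (a - d) (b - d).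
Proof.
  intros Hf.
  replace (a - d) with (1 * a + - d) in * by ring. replace (b - d) with (1 * b + - d) in * by ring.
  rewrite <- (RInt_comp_lin f 1 (- d) a b Hf). apply RInt_ext. intros t _.
  change (f (t - d) = 1 * f (1 * t + - d)). rewrite Rmult_1_l. f_equal. ring.
Qed.

Lemma RInt_eq_of_shift_sandwich (f g : R -> R) (a b B : R) : a <= b ->
  decreasing f -> decreasing g -> (forall t, Rabs (f t) <= B) ->
  (forall t, f t <= g t) -> (forall t t', t' < t -> g t <= f t') ->
  RInt g a b = RInt f a b.
Proof.
  intros Hab Hf Hg HB Hfg Hgf.
  assert (Hexf : forall u v, ex_RInt f u v) by (intros; apply ex_RInt_decreasing, Hf).
  assert (Hexg : ex_RInt g a b) by (apply ex_RInt_decreasing, Hg).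
  assert (HB0 : 0 <= B) by (specialize (HB 0); pose proof (Rabs_pos (f 0)); lra).
  (* [g <= f (. - d)], and shifting the window of [f] by [d] costs at most [2 d B]. *)
  assert (Hshift : forall d, 0 < d -> RInt g a b <= RInt f a b + 2 * d * B).
  { intros d Hd.
    assert (Hsh : RInt g a b <= RInt f (a - d) (b - d)).
    { rewrite <- RInt_shift by apply Hexf.
      apply RInt_le; [exact Hab|exact Hexg| |intros t _; apply Hgf; lra].
      apply ex_RInt_decreasing. intros u v Huv. apply Hf. lra. }
    assert (Hedge : forall c, Rabs (RInt f (c - d) c) <= d * B).
    { intros c. replace d with (c - (c - d)) at 2 by ring.
      apply abs_RInt_le_const; [lra|apply Hexf|auto]. }
    pose proof (RInt_Chasles f (a - d) (b - d) b (Hexf _ _) (Hexf _ _)) as C1.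
    pose proof (RInt_Chasles f (a - d) a b (Hexf _ _) (Hexf _ _)) as C2.
    change plus with Rplus in C1, C2.
    pose proof (Hedge a) as Ea. pose proof (Hedge b) as Eb.
    apply Rabs_le_between in Ea, Eb. lra. }
  apply Rle_antisym.
  - apply Rle_plus_epsilon. intros eps Heps.
    assert (Hd : 0 < eps / (2 * B + 1)) by (apply Rdiv_lt_0_compat; lra).
    assert (2 * (eps / (2 * B + 1)) * B <= eps).
    { apply (Rmult_le_reg_r (2 * B + 1)); [lra|]. field_simplify; nra. }
    pose proof (Hshift _ Hd). lra.
  - apply RInt_le; [exact Hab|apply Hexf|exact Hexg|]. intros t _. apply Hfg.
Qed.

Definition indicator {T : Type} (P : T -> Prop) (s : T) : R :=
  if excluded_middle_informative (P s) then 1 else 0.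

Definition monotone_capacity {T : Type} (k : (T -> Prop) -> R) : Prop :=
  forall A B : T -> Prop, (forall s, A s -> B s) -> k A <= k B.

Lemma decreasing_minus_const (f : R -> R) (c : R) :
  decreasing f -> decreasing (fun t => f t - c).
Proof. intros Hf u v Huv. specialize (Hf u v Huv). simpl in *. lra. Qed.

Lemma level_decreasing {T : Type} (k : (T -> Prop) -> R) (y : T -> R) :
  monotone_capacity k -> decreasing (fun t => k (fun s => t <= y s)).
Proof. intros Hk u v Huv. apply Hk. intros s Hs. lra. Qed.

Lemma choquet_of_is_RInt {T : Type} (k : (T -> Prop) -> R) (y : T -> R) (M l1 l2 : R) :
  (forall s, Rabs (y s) <= M) -> k (fun _ => False) = 0 ->
  is_RInt (fun t => k (fun s => t <= y s)) 0 M l1 ->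
  is_RInt (fun t => k (fun s => t <= y s) - k (fun _ => True)) (- M) 0 l2 ->
  choquet k y = l1 + l2.
Proof.
  intros Hy Hk0 H1 H2. unfold choquet. f_equal; apply is_RInt_gen_unique.
  - apply (is_RInt_gen_pinfty_of_support _ M); [exact H1|]. intros t Ht.
    replace (fun s => t <= y s) with (fun _ : T => False); [exact Hk0|].
    rewrite boolp.predeqE. intros s. specialize (Hy s). apply Rabs_le_between in Hy. lra.
  - apply (is_RInt_gen_minfty_of_support _ M); [exact H2|]. intros t Ht.
    replace (fun s => t <= y s) with (fun _ : T => True); [ring|].
    rewrite boolp.predeqE. intros s. specialize (Hy s). apply Rabs_le_between in Hy. lra.
Qed.

Lemma choquet_bounded {T : Type} (k : (T -> Prop) -> R) (y : T -> R) (M : R) :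
  monotone_capacity k -> k (fun _ => False) = 0 -> (forall s, Rabs (y s) <= M) ->
  choquet k y = RInt (fun t => k (fun s => t <= y s)) 0 M
    + RInt (fun t => k (fun s => t <= y s) - k (fun _ => True)) (- M) 0.
Proof.
  intros Hk Hk0 Hy. apply (choquet_of_is_RInt k y M); [exact Hy|exact Hk0| |];
    apply (@RInt_correct R_CompleteNormedModule), ex_RInt_decreasing.
  - exact (level_decreasing k y Hk).
  - exact (decreasing_minus_const _ _ (level_decreasing k y Hk)).
Qed.

Lemma choquet_indicator {T : Type} (k : (T -> Prop) -> R) (P : T -> Prop) :
  k (fun _ => False) = 0 -> choquet k (indicator P) = k P.
Proof.
  intros Hk0.
  assert (Hlevel : forall t, (fun s => t <= indicator P s) =
    if Rle_dec t 0 then (fun _ => True) else if Rle_dec t 1 then P else (fun _ => False)).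
  { intros t. rewrite boolp.predeqE. intros s. unfold indicator.
    destruct excluded_middle_informative, Rle_dec as [|H0]; try destruct Rle_dec;
      split; intros; (tauto || lra). }
  rewrite (choquet_of_is_RInt k (indicator P) 1 ((1 - 0) * k P) ((0 - - 1) * 0)).
  - ring.
  - intros s. unfold indicator. destruct excluded_middle_informative;
      rewrite ?Rabs_R1, ?Rabs_R0; lra.
  - exact Hk0.
  - apply is_RInt_const_on. intros t Ht. rewrite Rmin_left, Rmax_right in Ht by lra.
    rewrite Hlevel. do 2 (destruct Rle_dec; try lra).
  - apply is_RInt_const_on. intros t Ht. rewrite Rmin_left, Rmax_right in Ht by lra.
    rewrite Hlevel. destruct Rle_dec; [ring|lra].
Qed.

Lemma choquet_threshold {T : Type} (k : (T -> Prop) -> R) (y : T -> R) (M L : R) :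
  (forall s, Rabs (y s) <= M) -> k (fun _ => False) = 0 -> k (fun _ => True) = 1 ->
  - M <= L <= M ->
  (forall t, t < L -> k (fun s => t <= y s) = 1) ->
  (forall t, L < t -> k (fun s => t <= y s) = 0) ->
  choquet k y = L.
Proof.
  intros Hy Hk0 Hk1 HL Hbelow Habove.
  destruct (Rle_dec 0 L) as [HL0|HL0].
  - rewrite (choquet_of_is_RInt k y M ((L - 0) * 1 + (M - L) * 0) ((0 - - M) * 0));
      [ring|exact Hy|exact Hk0| |].
    + apply is_RInt_two_valued; [lra|intros t Ht; apply Hbelow; lra|].
      intros t Ht. apply Habove. lra.
    + apply is_RInt_const_on. intros t Ht. rewrite Rmin_left, Rmax_right in Ht by lra.
      rewrite Hk1, Hbelow by lra. ring.
  - rewrite (choquet_of_is_RInt k y M ((M - 0) * 0) ((L - - M) * 0 + (0 - L) * (- 1)));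
      [ring|exact Hy|exact Hk0| |].
    + apply is_RInt_const_on. intros t Ht. rewrite Rmin_left, Rmax_right in Ht by lra.
      apply Habove. lra.
    + apply is_RInt_two_valued; [lra| |]; intros t Ht; rewrite Hk1.
      * rewrite Hbelow by lra. ring.
      * rewrite Habove by lra. ring.
Qed.

Lemma choquet_eq_of_level_sandwich {S T : Type} (k1 : (S -> Prop) -> R) (k2 : (T -> Prop) -> R)
    (y1 : S -> R) (y2 : T -> R) (M : R) :
  monotone_capacity k1 -> monotone_capacity k2 ->
  k1 (fun _ => False) = 0 -> k2 (fun _ => False) = 0 -> k1 (fun _ => True) = k2 (fun _ => True) ->
  0 <= M -> (forall s, Rabs (y1 s) <= M) -> (forall s, Rabs (y2 s) <= M) ->
  (forall t, k1 (fun s => t <= y1 s) <= k2 (fun s => t <= y2 s)) ->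
  (forall t t', t' < t -> k2 (fun s => t <= y2 s) <= k1 (fun s => t' <= y1 s)) ->
  choquet k1 y1 = choquet k2 y2.
Proof.
  intros Hk1 Hk2 H1 H2 Htop HM Hy1 Hy2 Hle Hge.
  rewrite (choquet_bounded k1 y1 M), (choquet_bounded k2 y2 M), <- Htop by assumption.
  set (c := k1 (fun _ => True)).
  assert (Hrange : forall t, 0 <= k1 (fun s => t <= y1 s) <= c).
  { intros t. unfold c. rewrite <- H1. split; apply Hk1; tauto. }
  f_equal; symmetry; apply (RInt_eq_of_shift_sandwich _ _ _ _ c); try lra.
  - apply level_decreasing, Hk1.
  - apply level_decreasing, Hk2.
  - intros t. apply Rabs_le_between. specialize (Hrange t). lra.
  - exact Hle.
  - exact Hge.
  - apply decreasing_minus_const, level_decreasing, Hk1.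
  - apply decreasing_minus_const, level_decreasing, Hk2.
  - intros t. apply Rabs_le_between. specialize (Hrange t). lra.
  - intros t. specialize (Hle t). lra.
  - intros t t' Ht. specialize (Hge t t' Ht). lra.
Qed.

Lemma ultrafilter_full (F : (PosNat -> Prop) -> Prop) :
  is_ultrafilter F -> F (fun _ => True).
Proof.
  intros (_ & Hup & _ & Hcompl). destruct (Hcompl (fun _ => True)) as [H|H]; [exact H|].
  apply (Hup _ _ H). auto.
Qed.

Lemma mu_empty (F : (PosNat -> Prop) -> Prop) : is_ultrafilter F -> mu F (fun _ => False) = 0.
Proof. intros [Hne _]. unfold mu. destruct excluded_middle_informative; tauto. Qed.

Lemma mu_full (F : (PosNat -> Prop) -> Prop) : is_ultrafilter F -> mu F (fun _ => True) = 1.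
Proof.
  intros HF. unfold mu. destruct excluded_middle_informative as [|Hn]; [reflexivity|].
  contradiction (Hn (ultrafilter_full F HF)).
Qed.

Lemma ultrafilter_limit_exists (F : (PosNat -> Prop) -> Prop) (x : PosNat -> R) (M : R) :
  is_ultrafilter F -> (forall n, Rabs (x n) <= M) ->
  exists L, - M <= L <= M /\ (forall t, t < L -> F (fun n => t <= x n)) /\
    (forall t, L < t -> ~ F (fun n => t <= x n)).
Proof.
  intros HF Hx. pose proof HF as (Hne & Hup & _).
  assert (Hbnd : forall n, - M <= x n <= M) by (intros n; apply Rabs_le_between, Hx).
  assert (Hub : forall t, F (fun n => t <= x n) -> t <= M).
  { intros t Ht. apply Rnot_lt_le. intros HMt. apply Hne. apply (Hup _ _ Ht).
    intros n Hn. specialize (Hbnd n). lra. }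
  assert (Hlow : F (fun n => - M <= x n)).
  { apply (Hup _ _ (ultrafilter_full F HF)). intros n _. apply Hbnd. }
  destruct (completeness (fun t => F (fun n => t <= x n))) as [L [HL HLmin]];
    [exists M; exact Hub|exists (- M); exact Hlow|].
  exists L. split; [split; [exact (HL _ Hlow)|exact (HLmin M Hub)]|split].
  - intros t Ht. apply NNPP. intros Hnot.
    assert (L <= t); [|lra]. apply HLmin. intros s Hs. apply Rnot_lt_le. intros Hts.
    apply Hnot, (Hup _ _ Hs). intros n Hn. lra.
  - intros t Ht Hft. specialize (HL t Hft). lra.
Qed.

Lemma choquet_mu_ultrafilter (F : (PosNat -> Prop) -> Prop) (x : PosNat -> R) (M : R) :
  is_ultrafilter F -> (forall n, Rabs (x n) <= M) ->
  Rabs (choquet (mu F) x) <= M /\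
  (forall t, t < choquet (mu F) x -> F (fun n => t <= x n)) /\
  (forall t, choquet (mu F) x < t -> ~ F (fun n => t <= x n)).
Proof.
  intros HF Hx. destruct (ultrafilter_limit_exists F x M HF Hx) as (L & HL & Hbelow & Habove).
  replace (choquet (mu F) x) with L.
  { split; [apply Rabs_le_between, HL|split; assumption]. }
  symmetry. apply (choquet_threshold _ _ M); [exact Hx|apply mu_empty, HF|apply mu_full, HF|exact HL| |].
  - intros t Ht. unfold mu. destruct excluded_middle_informative as [|Hn]; [reflexivity|].
    contradiction (Hn (Hbelow t Ht)).
  - intros t Ht. unfold mu. destruct excluded_middle_informative as [Hy|]; [|reflexivity].
    contradiction (Habove t Ht Hy).
Qed.

Lemma Ult_of_not_in_ideal (I : (PosNat -> Prop) -> Prop) (Q : PosNat -> Prop) :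
  is_ideal I -> ~ I Q -> exists F : Ult I, proj1_sig F Q.
Proof.
  intros (Hdown & Hunion & _ & Hfin) HQ.
  assert (Hempty : I (fun _ => False)) by (apply Hfin; exists 0%nat; intros n []).
  (* [G0] is the filter generated by [Q] and the dual filter of [I]. *)
  set (G0 := fun S : PosNat -> Prop => exists J, I J /\ forall n, Q n -> S n \/ J n).
  assert (HG0 : filter.ProperFilter G0).
  { constructor.
    - intros (J & HJ & HQJ). apply HQ, (Hdown _ J HJ). intros n Hn.
      destruct (HQJ n Hn) as [[]|HJn]; exact HJn.
    - constructor.
      + exists (fun _ => False). split; [exact Hempty|]. intros n _. left. constructor.
      + intros A B (J1 & HJ1 & H1) (J2 & HJ2 & H2). exists (fun n => J1 n \/ J2 n).
        split; [apply Hunion; assumption|]. intros n Hn.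
        destruct (H1 n Hn), (H2 n Hn); try tauto. left. split; assumption.
      + intros A B HAB (J & HJ & H). exists J. split; [exact HJ|]. intros n Hn.
        destruct (H n Hn); auto. }
  destruct (filter.ultraFilterLemma HG0) as (G & HG & HG0G).
  pose proof HG as [[Hne HGfilter] _].
  assert (HGult : in_Ult I G).
  { split; [split; [exact Hne|split; [|split]]|].
    - intros A B HA HAB. exact (filter.filterS HAB HA).
    - intros A B HA HB. exact (filter.filterI HA HB).
    - intros A. exact (filter.in_ultra_setVsetC A HG).
    - intros A HA. apply HG0G. exists (compl A). split; [exact HA|].
      intros n _. destruct (classic (A n)); [left|right]; assumption. }
  exists (exist _ G HGult). apply HG0G. exists (fun _ => False). split; auto.
Qed.

Definition Ult_clopen (I : (PosNat -> Prop) -> Prop) (A : PosNat -> Prop) : Ult I -> Prop :=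
  fun F => proj1_sig F A.

Lemma Ult_clopen_symdiff (I : (PosNat -> Prop) -> Prop) (A B : PosNat -> Prop) :
  is_ideal I -> I (symdiff A B) -> Ult_clopen I A = Ult_clopen I B.
Proof.
  intros [Hdown _] Hs. rewrite boolp.predeqE. intros F.
  destruct (proj2_sig F) as [(_ & Hup & Hcap & _) Hdual].
  assert (HF : proj1_sig F (compl (symdiff A B))).
  { apply Hdual. apply (Hdown _ _ Hs). intros n Hn. apply NNPP, Hn. }
  unfold Ult_clopen. split; intros HX; apply (Hup _ _ (Hcap _ _ HX HF));
    intros n [Hn Hsn]; apply NNPP; unfold compl, symdiff in Hsn; tauto.
Qed.

Section InnerCapacity.

Variables (I : (PosNat -> Prop) -> Prop) (nu : (PosNat -> Prop) -> R).
Hypotheses (HI : is_ideal I) (Hnu : normalized_capacity nu).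

Definition inner_values (B : Ult I -> Prop) (r : R) : Prop :=
  exists A, (forall F, Ult_clopen I A F -> B F) /\ r = nu A.

Lemma inner_values_bound (B : Ult I -> Prop) : bound (inner_values B).
Proof.
  exists 1. intros r (A & _ & ->). destruct Hnu as (Hmono & _ & Hfull).
  rewrite <- Hfull. apply Hmono. auto.
Qed.

Lemma inner_values_inhabited (B : Ult I -> Prop) : exists r, inner_values B r.
Proof.
  exists (nu (fun _ => False)), (fun _ => False). split; [|reflexivity].
  intros F HF. contradiction (proj1 (proj1 (proj2_sig F)) HF).
Qed.

Definition inner_capacity (B : Ult I -> Prop) : R :=
  proj1_sig (completeness _ (inner_values_bound B) (inner_values_inhabited B)).

Lemma inner_capacity_ge (A : PosNat -> Prop) (B : Ult I -> Prop) :
  (forall F, Ult_clopen I A F -> B F) -> nu A <= inner_capacity B.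
Proof.
  intros HAB. apply (proj1 (proj2_sig (completeness _ _ _))). exists A. auto.
Qed.

Lemma inner_capacity_le (B : Ult I -> Prop) (c : R) :
  (forall A, (forall F, Ult_clopen I A F -> B F) -> nu A <= c) -> inner_capacity B <= c.
Proof.
  intros Hc. apply (proj2 (proj2_sig (completeness _ _ _))). intros r (A & HA & ->). auto.
Qed.

Lemma inner_capacity_monotone : monotone_capacity inner_capacity.
Proof.
  intros B B' HBB'. apply inner_capacity_le. intros A HA. apply inner_capacity_ge. auto.
Qed.

Hypothesis Hinv : I_invariant I nu.

Lemma invariant_le_of_clopen_sub (A B : PosNat -> Prop) :
  (forall F, Ult_clopen I A F -> Ult_clopen I B F) -> nu A <= nu B.
Proof.
  intros HAB. pose proof HI as (Hdown & _).
  assert (Hdiff : I (fun n => A n /\ ~ B n)).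
  { apply NNPP. intros Hnot. destruct (Ult_of_not_in_ideal I _ HI Hnot) as [F HF].
    destruct (proj1 (proj2_sig F)) as (Hne & Hup & Hcap & _).
    assert (HFB : Ult_clopen I B F) by (apply HAB, (Hup _ _ HF); tauto).
    apply Hne, (Hup _ _ (Hcap _ _ HF HFB)). tauto. }
  rewrite (Hinv A (fun n => A n /\ B n)).
  - apply (proj1 Hnu). tauto.
  - apply (Hdown _ _ Hdiff). unfold symdiff. tauto.
Qed.

Lemma inner_capacity_clopen (A : PosNat -> Prop) : inner_capacity (Ult_clopen I A) = nu A.
Proof.
  apply Rle_antisym.
  - apply inner_capacity_le. intros A' HA'. exact (invariant_le_of_clopen_sub A' A HA').
  - apply inner_capacity_ge. auto.
Qed.

Lemma inner_capacity_normalized : borel_normalized_capacity I inner_capacity.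
Proof.
  destruct Hnu as (_ & Hempty & Hfull).
  split; [intros A B _ _; apply inner_capacity_monotone|split].
  - replace (fun _ : Ult I => False) with (Ult_clopen I (fun _ => False)).
    + rewrite inner_capacity_clopen. exact Hempty.
    + rewrite boolp.predeqE. intros F. split; [apply (proj1 (proj2_sig F))|tauto].
  - replace (fun _ : Ult I => True) with (Ult_clopen I (fun _ => True)).
    + rewrite inner_capacity_clopen. exact Hfull.
    + rewrite boolp.predeqE. intros F. split; [tauto|intros _].
      apply ultrafilter_full, (proj2_sig F).
Qed.

Lemma inner_capacity_choquet (x : PosNat -> R) : ell_inf x ->
  choquet nu x = choquet inner_capacity (fun F : Ult I => choquet (mu (proj1_sig F)) x).
Proof.
  intros [M Hx].
  pose proof (fun F : Ult I => choquet_mu_ultrafilter _ x M (proj1 (proj2_sig F)) Hx) as Hlim.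
  pose proof inner_capacity_normalized as (_ & Hempty & Hfull).
  apply (choquet_eq_of_level_sandwich _ _ _ _ M).
  - exact (proj1 Hnu).
  - exact inner_capacity_monotone.
  - exact (proj1 (proj2 Hnu)).
  - exact Hempty.
  - rewrite Hfull. exact (proj2 (proj2 Hnu)).
  - pose proof (Rabs_pos (x (exist _ 1%nat (le_n 1)))). specialize (Hx (exist _ 1%nat (le_n 1))). lra.
  - exact Hx.
  - intros F. apply Hlim.
  - intros t. apply inner_capacity_ge. intros F HF. apply Rnot_lt_le. intros Hlt.
    exact (proj2 (proj2 (Hlim F)) t Hlt HF).
  - intros t t' Htt'. apply inner_capacity_le. intros A HA.
    apply invariant_le_of_clopen_sub. intros F HF.
    apply (proj1 (proj2 (Hlim F))). specialize (HA F HF). simpl in HA. lra.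
Qed.

End InnerCapacity.

Lemma ell_inf_indicator (A : PosNat -> Prop) : ell_inf (indicator A).
Proof.
  exists 1. intros n. unfold indicator.
  destruct excluded_middle_informative; rewrite ?Rabs_R1, ?Rabs_R0; lra.
Qed.

Lemma choquet_representation_on_sets (I : (PosNat -> Prop) -> Prop)
    (nu : (PosNat -> Prop) -> R) (rho : (Ult I -> Prop) -> R) :
  nu (fun _ => False) = 0 ->
  (forall x, ell_inf x ->
     choquet nu x = choquet rho (fun F : Ult I => choquet (mu (proj1_sig F)) x)) ->
  forall A, nu A = choquet rho (fun F : Ult I => mu (proj1_sig F) A).
Proof.
  intros Hempty Hrep A.
  rewrite <- (choquet_indicator nu A Hempty), (Hrep _ (ell_inf_indicator A)).
  f_equal. rewrite boolp.funeqE. intros F.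
  apply choquet_indicator, mu_empty, (proj2_sig F).
Qed.

Lemma invariant_of_representation (I : (PosNat -> Prop) -> Prop)
    (nu : (PosNat -> Prop) -> R) (rho : (Ult I -> Prop) -> R) :
  is_ideal I ->
  (forall A, nu A = choquet rho (fun F : Ult I => mu (proj1_sig F) A)) ->
  I_invariant I nu.
Proof.
  intros HI Hrep A B Hs. rewrite (Hrep A), (Hrep B).
  change (fun F : Ult I => mu (proj1_sig F) A) with (indicator (Ult_clopen I A)).
  change (fun F : Ult I => mu (proj1_sig F) B) with (indicator (Ult_clopen I B)).
  rewrite (Ult_clopen_symdiff I A B HI Hs). reflexivity.
Qed.

Theorem theorem1p1 (nu : (PosNat -> Prop) -> R) (I : (PosNat -> Prop) -> Prop)
  (Hnu : normalized_capacity nu) (HI : is_ideal I) :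
  (I_invariant I nu <->
   exists rho : (Ult I -> Prop) -> R, borel_normalized_capacity I rho /\
     forall x : PosNat -> R, ell_inf x ->
       choquet nu x = choquet rho (fun F : Ult I => choquet (mu (proj1_sig F)) x))
  /\
  (I_invariant I nu <->
   exists rho : (Ult I -> Prop) -> R, borel_normalized_capacity I rho /\
     forall A : PosNat -> Prop,
       nu A = choquet rho (fun F : Ult I => mu (proj1_sig F) A)).
Proof.
  pose proof (proj1 (proj2 Hnu)) as Hempty.
  split; split.
  - intros Hinv. exists (inner_capacity I nu Hnu).
    split; [exact (inner_capacity_normalized I nu HI Hnu Hinv)|].
    exact (inner_capacity_choquet I nu HI Hnu Hinv).
  - intros (rho & _ & Hrep). apply (invariant_of_representation I nu rho HI).
    exact (choquet_representation_on_sets I nu rho Hempty Hrep).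
  - intros Hinv. exists (inner_capacity I nu Hnu).
    split; [exact (inner_capacity_normalized I nu HI Hnu Hinv)|].
    exact (choquet_representation_on_sets I nu _ Hempty (inner_capacity_choquet I nu HI Hnu Hinv)).
  - intros (rho & _ & Hrep). exact (invariant_of_representation I nu rho HI Hrep).
Qed.
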